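(* Let $H$ be an ASC-hypergraph and $M\subseteq H$. Then every $M$-antichain misses $H$ if and only if there is a construction $K$ of $H$ with $M\subseteq K$.
   Context: A hypergraph is a finite set $H$ of nonempty subsets of some finite set; its carrier is $\bigcup H$. For a family $F$ and set $Y$, $F_Y=\{X\in F\mid X\subseteq Y\}$. A hypergraph partition of $H$ is a partition $\{H_1,\dots,H_n\}$ ($n\ge0$) of the set $H$ with $\{\bigcup H_1,\dots,\bigcup H_n\}$ a partition of $\bigcup H$; $H$ is connected if it has exactly one hypergraph partition; the finest hypergraph partition is the unique one whose blocks are connected. $H$ is atomic if $\{x\}\in H$ for all $x\in\bigcup H$; saturated if $X_1,X_2\in H$ with $X_1\cap X_2\neq\emptyset$ imply $X_1\cup X_2\in H$. An ASC-hypergraph is one that is atomic, saturated and connected. Constructions of an atomic $H$, by induction on $|\bigcup H|$: (0) $\emptyset$ is the only construction of $\emptyset$; (1) if $|\bigcup H|\ge1$, $H$ connected, $x\in\bigcup H$, $K$ a construction of $H_{\bigcup H\setminus\{x\}}$, then $K\cup\{\bigcup H\}$ is a construction of $H$; (2) if $H$ is not connected with finest hypergraph partition $\{H_1,\dots,H_n\}$, $n\ge2$, and $K_i$ is a construction of $H_i$, then $K_1\cup\dots\cup K_n$ is a construction of $H$. For $M\subseteq H$, an $M$-antichain is a subset $S\subseteq M$ with $|S|\ge2$ such that no member of $S$ is a subset of another member of $S$; it misses $H$ when $\bigcup S\notin H$. *)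

From mathcomp Require Import all_boot.
Set Implicit Arguments. Unset Strict Implicit. Unset Printing Implicit Defensive.

Section Hyper.
Variable T : finType.
Implicit Types (H F M S K : {set {set T}}) (Y X : {set T}).

(* H is a hypergraph: every member is nonempty. Its carrier is [cover H]. *)
Definition hypergraph H : Prop := forall X, X \in H -> X != set0.

Definition restr F Y : {set {set T}} := [set X in F | X \subset Y].

(* P = {H_1,...,H_n} is a hypergraph partition of H: P partitions the set H
   (blocks nonempty, pairwise disjoint, union H) and the unions of distinct
   blocks are disjoint (so {cover H_1,...,cover H_n} is a partition of
   cover H, indexed injectively). *)
Definition hpartition H (P : {set {set {set T}}}) : Prop :=
  partition P H /\
  (forall B1 B2, B1 \in P -> B2 \in P -> B1 != B2 ->
     [disjoint cover B1 & cover B2]).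

Definition connected H : Prop :=
  exists P, hpartition H P /\ forall P', hpartition H P' -> P' = P.

Definition finest_hpartition H (P : {set {set {set T}}}) : Prop :=
  hpartition H P /\ forall B, B \in P -> connected B.

Definition atomic H : Prop := forall x, x \in cover H -> [set x] \in H.

Definition saturated H : Prop :=
  forall X1 X2, X1 \in H -> X2 \in H -> X1 :&: X2 != set0 -> X1 :|: X2 \in H.

Definition ASC H : Prop := [/\ hypergraph H, atomic H, saturated H & connected H].

Inductive construction : {set {set T}} -> {set {set T}} -> Prop :=
| constr_empty : construction set0 set0
| constr_conn H x K :
    atomic H -> 0 < #|cover H| -> connected H -> x \in cover H ->
    construction (restr H (cover H :\ x)) K ->
    construction H (cover H |: K)
| constr_split H (P : {set {set {set T}}}) (Kf : {set {set T}} -> {set {set T}}) :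
    atomic H -> ~ connected H -> finest_hpartition H P -> 2 <= #|P| ->
    (forall B, B \in P -> construction B (Kf B)) ->
    construction H (\bigcup_(B in P) Kf B).

Definition antichain M S : Prop :=
  [/\ S \subset M, 2 <= #|S| &
      forall X Y, X \in S -> Y \in S -> X \subset Y -> X = Y].

Definition misses H S : Prop := cover S \notin H.

End Hyper.

(** Every member of a construction of [H] is a nonempty subset of the carrier,
  and no antichain of a construction has its union in [H]: in case (1) the top
  set [cover H] contains every other member, which all avoid [x]; in case (2)
  an antichain whose union lies in [H] lies within a single block.

  Conversely, a construction containing [M] is built by induction on the
  carrier [C := cover H].  If [C \in H], the members of [M] other than [C]
  cannot cover [C]: otherwise their maximal elements would form an
  [M]-antichain with union [C \in H], or be the single set [C].  So some
  [x \in C] lies outside all of them and we recurse on [H_(C \ x)].  If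
  [C \notin H], saturation makes the maximal members of [H] pairwise disjoint;
  the restrictions of [H] to them are its connected components, and we recurse
  on each. *)

From mathcomp Require Import all_boot.
Set Implicit Arguments. Unset Strict Implicit. Unset Printing Implicit Defensive.

Section Hypergraphs.
Variable T : finType.
Implicit Types (H M K S B : {set {set T}}) (X Y Z : {set T}).

Definition antichains_miss M H := forall S, antichain M S -> misses H S.

Lemma antichains_missS M M' H H' :
  M' \subset M -> H' \subset H -> antichains_miss M H -> antichains_miss M' H'.
Proof.
move=> sM'M sH'H missM S [sSM' S2 antiS]; apply: contra (missM S _) => [/(subsetP sH'H) //|].
by split=> //; apply: subset_trans sM'M.
Qed.

Lemma subset_disjoint_eq0 X (A C : {set T}) :
  X \subset A -> X \subset C -> [disjoint A & C] -> X = set0.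
Proof.
by move=> sXA sXC dAC; apply/eqP; rewrite -[X]setIid setI_eq0 (disjointW sXA sXC).
Qed.

Lemma cover_subset H H' : H \subset H' -> cover H \subset cover H'.
Proof. by move=> sHH'; apply/bigcupsP=> X XH; apply: bigcup_sup (subsetP sHH' X XH). Qed.

Lemma restr_subset H Y : restr H Y \subset H.
Proof. by apply/subsetP=> X /setIdP[]. Qed.

Lemma cover_restr_subset H Y : cover (restr H Y) \subset Y.
Proof. exact: subset_trans (cover_setI H Y) (subsetIr _ _). Qed.

Lemma cover_restr H Z : Z \in H -> cover (restr H Z) = Z.
Proof.
move=> ZH; apply/eqP; rewrite eqEsubset cover_restr_subset.
by apply: bigcup_sup; rewrite inE ZH subxx.
Qed.

Lemma restr_hypergraph H Y : hypergraph H -> hypergraph (restr H Y).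
Proof. by move=> hH X /setIdP[/hH]. Qed.

Lemma restr_atomic H Y : atomic H -> atomic (restr H Y).
Proof.
move=> atH x /bigcupP[X /setIdP[XH sXY] xX].
by rewrite inE atH ?sub1set ?(subsetP sXY) //; apply/bigcupP; exists X.
Qed.

Lemma restr_saturated H Y : saturated H -> saturated (restr H Y).
Proof.
move=> satH X1 X2 /setIdP[X1H sX1] /setIdP[X2H sX2] meet.
by rewrite inE satH // subUset sX1 sX2.
Qed.

Lemma construction_sub_cover H K X : construction H K -> X \in K -> X \subset cover H.
Proof.
move=> cHK; elim: cHK X => {H K} [|H x K _ _ _ _ _ IH|H P Kf _ _ [[pP _] _] _ _ IH] X.
- by rewrite inE.
- case/setU1P=> [-> // | XK]; apply: subset_trans (IH X XK) _.
  exact: subset_trans (cover_restr_subset _ _) (subsetDl _ _).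
- case/bigcupP=> B BP XK; apply: subset_trans (IH B BP X XK) _.
  exact: cover_subset (partitionS pP BP).
Qed.

Lemma construction_neq0 H K X : construction H K -> X \in K -> X != set0.
Proof.
move=> cHK; elim: cHK X => {H K} [|H x K _ c0 _ _ _ IH|H P Kf _ _ _ _ _ IH] X.
- by rewrite inE.
- by case/setU1P=> [->|/IH //]; rewrite -card_gt0.
- by case/bigcupP=> B BP /(IH B BP).
Qed.

Lemma construction_antichains_miss H K : construction H K -> antichains_miss K H.
Proof.
elim=> {H K} [|H x K _ _ _ _ cK IH|H P Kf _ _ [[pP dP] _] _ cB IH] S [sSK S2 antiS].
- by rewrite /misses inE.
- set C := cover H.
  have sK_Cx Y : Y \in K -> Y \subset C :\ x.
    by move=> YK; apply: subset_trans (construction_sub_cover cK YK) (cover_restr_subset _ _).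
  have [CS|CS] := boolP (C \in S).
    have /set0Pn[Y /setD1P[YC YS]] : S :\ C != set0.
      by move: S2; rewrite (cardsD1 C) CS ltnS card_gt0.
    have YK : Y \in K by move: (subsetP sSK Y YS); rewrite in_setU1 (negPf YC).
    by case/eqP: YC; apply: antiS => //; apply: subset_trans (sK_Cx Y YK) (subsetDl _ _).
  have sSK' : S \subset K.
    apply/subsetP=> Y YS; have /setU1P[eYC|//] := subsetP sSK Y YS.
    by move: YS; rewrite eYC (negPf CS).
  apply: contra (IH S (And3 sSK' S2 antiS)) => CSH.
  by rewrite inE CSH; apply/bigcupsP=> Y YS; apply: sK_Cx (subsetP sSK' Y YS).
- apply/negP; rewrite -(cover_partition pP) => /bigcupP[B BP SB].
  have sSKB : S \subset Kf B.
    apply/subsetP=> Y YS; have /bigcupP[B' B'P YK] := subsetP sSK Y YS.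
    have [<- //|neqB] := eqVneq B' B.
    case/eqP: (construction_neq0 (cB B' B'P) YK).
    apply: subset_disjoint_eq0 (construction_sub_cover (cB B' B'P) YK) _ (dP _ _ B'P BP neqB).
    exact: subset_trans (bigcup_sup Y YS) (bigcup_sup (cover S) SB).
  by have := IH B BP S (And3 sSKB S2 antiS); rewrite /misses SB.
Qed.

Definition maximals H := [set Z | maxset [pred Y | Y \in H] Z].

Lemma maximalsP H Z :
  reflect (Z \in H /\ forall Y, Y \in H -> Z \subset Y -> Y = Z) (Z \in maximals H).
Proof. by rewrite inE; apply: maxsetP. Qed.

Lemma maximals_subset H : maximals H \subset H.
Proof. by apply/subsetP=> Z /maximalsP[]. Qed.

Lemma maximals_exists H X : X \in H -> exists2 Z, Z \in maximals H & X \subset Z.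
Proof.
move=> XH; have [Z maxZ sXZ] := maxset_exists (P := [pred Y | Y \in H]) XH.
by exists Z; rewrite ?inE.
Qed.

Lemma cover_maximals H : cover (maximals H) = cover H.
Proof.
apply/eqP; rewrite eqEsubset cover_subset ?maximals_subset //=.
apply/bigcupsP=> X XH; have [Z maxZ sXZ] := maximals_exists XH.
exact: subset_trans sXZ (bigcup_sup Z maxZ).
Qed.

Lemma maximals_antichain M : 2 <= #|maximals M| -> antichain M (maximals M).
Proof.
split=> //; first exact: maximals_subset.
by move=> X Y /maximalsP[_ maxX] /maximalsP[YM _] sXY; rewrite (maxX Y YM sXY).
Qed.

Lemma maximals_disjoint H Z1 Z2 : saturated H ->
  Z1 \in maximals H -> Z2 \in maximals H -> Z1 != Z2 -> [disjoint Z1 & Z2].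
Proof.
move=> satH /maximalsP[Z1H max1] /maximalsP[Z2H max2].
rewrite -setI_eq0; apply: contraR => meet; have U12 := satH _ _ Z1H Z2H meet.
by rewrite -(max1 _ U12 (subsetUl _ _)) (max2 _ U12 (subsetUr _ _)).
Qed.

Definition components H := [set restr H Z | Z in maximals H].

Lemma components_hpartition H :
  hypergraph H -> saturated H -> hpartition H (components H).
Proof.
move=> hH satH.
have disjZ Z1 Z2 : Z1 \in maximals H -> Z2 \in maximals H ->
    restr H Z1 != restr H Z2 -> [disjoint Z1 & Z2].
  move=> max1 max2 neq; apply: maximals_disjoint satH max1 max2 _.
  by apply: contraNneq neq => ->.
split; last first.
  move=> _ _ /imsetP[Z1 max1 ->] /imsetP[Z2 max2 ->] neq.
  have /maximalsP[Z1H _] := max1; have /maximalsP[Z2H _] := max2.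
  by rewrite !cover_restr //; apply: disjZ.
apply/and3P; split.
- apply/eqP/setP=> X; apply/bigcupP/idP=> [[_ /imsetP[Z _ ->] /setIdP[] //]|XH].
  have [Z maxZ sXZ] := maximals_exists XH.
  by exists (restr H Z); [apply: imset_f | rewrite inE XH].
- apply/trivIsetP=> _ _ /imsetP[Z1 max1 ->] /imsetP[Z2 max2 ->] neq.
  rewrite -setI_eq0 -subset0; apply/subsetP=> X /setIP[/setIdP[XH sX1] /setIdP[_ sX2]].
  by case/eqP: (hH X XH); apply: subset_disjoint_eq0 sX1 sX2 (disjZ _ _ max1 max2 neq).
- apply/imsetP=> -[Z /maximalsP[ZH _] eZ].
  have : Z \in restr H Z by rewrite inE ZH subxx.
  by rewrite -eZ inE.
Qed.

Lemma hpartition_set1 H : H != set0 -> hpartition H [set H].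
Proof.
move=> H0; split.
- by apply/and3P; split; [rewrite cover1 | apply: trivIset1 | rewrite in_set1 eq_sym].
- by move=> B1 B2 /set1P-> /set1P->; rewrite eqxx.
Qed.

Lemma connected_cover_mem H : hypergraph H -> cover H \in H -> connected H.
Proof.
move=> hH CH; have H0 : H != set0 by apply/set0Pn; exists (cover H).
exists [set H]; split=> [|P [pP dP]]; first exact: hpartition_set1.
have /bigcupP[B0 B0P CB0] : cover H \in cover P by rewrite (cover_partition pP).
suff eP : P = [set B0] by rewrite eP -(cover_partition pP) eP cover1.
apply/setP=> B; rewrite in_set1; apply/idP/eqP=> [BP|-> //].
apply: contraTeq BP => neqB; apply/negP=> BP.
have /set0Pn[X XB] := partition_neq0 pP BP; have XH := subsetP (partitionS pP BP) X XB.
case/eqP: (hH X XH); apply: subset_disjoint_eq0 (bigcup_sup X XB) _ (dP _ _ BP B0P neqB).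
exact: subset_trans (bigcup_sup X XH) (bigcup_sup _ CB0).
Qed.

Lemma components_finest H :
  hypergraph H -> saturated H -> finest_hpartition H (components H).
Proof.
move=> hH satH; split=> [|_ /imsetP[Z /maximalsP[ZH _] ->]]; first exact: components_hpartition.
by apply: connected_cover_mem; [apply: restr_hypergraph | rewrite cover_restr // inE ZH subxx].
Qed.

Lemma connected_iff_cover_mem H : hypergraph H -> saturated H -> H != set0 ->
  connected H <-> cover H \in H.
Proof.
move=> hH satH H0; split=> [[P [_ uniqP]]|]; last exact: connected_cover_mem.
have : H \in components H.
  by rewrite (uniqP _ (components_hpartition hH satH)) -(uniqP _ (hpartition_set1 H0)) set11.
by case/imsetP=> Z /maximalsP[ZH _] eH; rewrite {1}eH cover_restr.
Qed.

Lemma antichains_miss_cover_setD1 M H Z :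
  antichains_miss M H -> Z \in H -> Z != set0 -> cover (M :\ Z) != Z.
Proof.
move=> missM ZH Z0; apply/eqP=> coverZ.
have coverS : cover (maximals (M :\ Z)) = Z by rewrite cover_maximals.
have [S2|S1] := leqP 2 #|maximals (M :\ Z)|.
  have [sSM _ antiS] := maximals_antichain S2.
  have antiM : antichain M (maximals (M :\ Z)).
    by split=> //; apply: subset_trans sSM (subD1set _ _).
  by have := missM _ antiM; rewrite /misses coverS ZH.
have /set0Pn[Y maxY] : maximals (M :\ Z) != set0.
  by apply: contra_neq Z0 => S0; rewrite -coverS S0 /cover big_set0.
have eS : maximals (M :\ Z) = [set Y] by apply/setP=> Y'; rewrite (card_le1P S1 Y maxY) in_set1.
have /maximalsP[/setD1P[YZ _] _] := maxY.
by case/eqP: YZ; rewrite -coverS eS cover1.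
Qed.

Section InductionStep.
Variables H M : {set {set T}}.
Hypotheses (hH : hypergraph H) (atH : atomic H) (satH : saturated H).
Hypotheses (sMH : M \subset H) (missM : antichains_miss M H).
Hypothesis IH : forall H' M', #|cover H'| < #|cover H| ->
  hypergraph H' -> atomic H' -> saturated H' -> M' \subset H' ->
  antichains_miss M' H' -> exists K, construction H' K /\ M' \subset K.

Lemma construction_cover_mem :
  cover H \in H -> exists K, construction H K /\ M \subset K.
Proof.
move=> CH; set C := cover H; set M' := M :\ C.
have sM'C : cover M' \subset C by apply: cover_subset; apply: subset_trans (subD1set M C) sMH.
have [x xC xM'] : exists2 x, x \in C & x \notin cover M'.
  apply/subsetPn; apply: contra (antichains_miss_cover_setD1 missM CH (hH CH)) => sCM'.
  by rewrite eqEsubset sM'C.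
have sM'Hx : M' \subset restr H (C :\ x).
  apply/subsetP=> X XM'; have /setD1P[_ XM] := XM'.
  rewrite inE (subsetP sMH X XM) subsetD1 (subset_trans (bigcup_sup X XM') sM'C).
  by apply: contra xM' => xX; apply/bigcupP; exists X.
have ltHx : #|cover (restr H (C :\ x))| < #|C|.
  exact: leq_ltn_trans (subset_leq_card (cover_restr_subset _ _)) (proper_card (properD1 xC)).
have [K [cK sM'K]] := IH ltHx (restr_hypergraph hH) (restr_atomic atH)
  (restr_saturated satH) sM'Hx (antichains_missS (subD1set M C) (restr_subset H _) missM).
exists (C |: K); split.
  by apply: constr_conn (connected_cover_mem hH CH) xC cK; rewrite // card_gt0 hH.
apply/subsetP=> X XM; have [->|XC] := eqVneq X C; first exact: setU11.
by rewrite setU1r // (subsetP sM'K) // in_setD1 XC.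
Qed.

Lemma construction_cover_notin : H != set0 ->
  cover H \notin H -> exists K, construction H K /\ M \subset K.
Proof.
move=> H0 CH; have [[pP _] _] := components_finest hH satH; set P := components H in pP *.
have ltP B : B \in P -> #|cover B| < #|cover H|.
  case/imsetP=> Z /maximalsP[ZH _] ->; rewrite cover_restr //; apply: proper_card.
  by rewrite properEneq bigcup_sup // andbT; apply: contraNneq CH => <-.
have /fin_all_exists[Kf cKf] :
    forall B, exists K, B \in P -> construction B K /\ M :&: B \subset K.
  move=> B; have [BP|] := boolP (B \in P); last by exists set0.
  case/imsetP: (BP) => Z _ eB; rewrite {}eB in BP *.
  have [K hK] := IH (ltP _ BP) (restr_hypergraph hH) (restr_atomic atH) (restr_saturated satH)
    (subsetIr M _) (antichains_missS (subsetIl _ _) (partitionS pP BP) missM).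
  by exists K.
exists (\bigcup_(B in P) Kf B); split.
  apply: constr_split (components_finest hH satH) _ (fun B BP => (cKf B BP).1) => //.
    by move/(connected_iff_cover_mem hH satH H0); apply/negP.
  rewrite ltnNge; apply/negP=> /card_le1P P1.
  have /set0Pn[B BP] : P != set0.
    by apply: contraNneq H0 => P0; move: (cover_partition pP); rewrite P0 /cover big_set0 => <-.
  have eP : P = [set B] by apply/setP=> B'; rewrite (P1 B BP) in_set1.
  have eBH : B = H by rewrite -(cover_partition pP) eP cover1.
  by have := ltP B BP; rewrite eBH ltnn.
apply/subsetP=> X XM; have /bigcupP[B BP XB] : X \in cover P.
  by rewrite (cover_partition pP) (subsetP sMH).
by apply/bigcupP; exists B; rewrite // (subsetP (cKf B BP).2) // inE XM.
Qed.

End InductionStep.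

Lemma antichains_miss_construction H M :
  hypergraph H -> atomic H -> saturated H -> M \subset H -> antichains_miss M H ->
  exists K, construction H K /\ M \subset K.
Proof.
have [n] := ubnP #|cover H|; elim: n H M => // n IHn H M ltHn hH atH satH sMH missM.
have [H0|H0] := eqVneq H set0.
  have -> : M = set0 by apply/eqP; rewrite -subset0 -H0.
  by exists set0; rewrite H0; split; [apply: constr_empty | apply: sub0set].
have IH H' M' (lt : #|cover H'| < #|cover H|) := IHn H' M' (leq_trans lt ltHn).
have [CH|CH] := boolP (cover H \in H).
  exact: construction_cover_mem.
exact: construction_cover_notin.
Qed.

End Hypergraphs.

Theorem proposition6p12 (T : finType) (H M : {set {set T}}) :
  ASC H -> M \subset H ->
  ((forall S : {set {set T}}, antichain M S -> misses H S) <->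
   exists K : {set {set T}}, construction H K /\ M \subset K).
Proof.
case=> hH atH satH _ sMH; split=> [missM|[K [cK sMK]]].
  exact: antichains_miss_construction.
exact: antichains_missS sMK (subxx H) (construction_antichains_miss cK).
Qed.
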